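(* Let $(\mathcal{A},e)$ be an order-unit space, $L$ a Lipschitz seminorm on $\mathcal{A}$ with metric $\rho_L$ on $S(\mathcal{A})$, and $r\ge 0$. The following are equivalent: (1) $\rho_L(\mu,\nu)\le 2r$ for all $\mu,\nu\in S(\mathcal{A})$; (2) $\|\tilde a\|^{\sim}\le r\tilde L(\tilde a)$ for all $a\in\mathcal{A}$.
   Context: An order-unit space is a real partially ordered vector space $\mathcal{A}$ with distinguished $e$ such that (i) for each $a$ there is $r$ with $a\le re$, and (ii) if $a\le re$ for all $r>0$ then $a\le0$; norm $\|a\|=\inf\{r\ge0:-re\le a\le re\}$ (not necessarily complete). States: continuous linear functionals $\mu$ with $\mu(e)=1=\|\mu\|$; $S(\mathcal{A})$ the set of states. A Lipschitz seminorm is a finite-valued seminorm $L$ with $L(a)=0$ iff $a\in\mathbb{R}e$; $\rho_L(\mu,\nu)=\sup\{|\mu(a)-\nu(a)|:L(a)\le1\}\in[0,\infty]$. For $a\in\mathcal{A}$, $\tilde a$ is its image in $\mathcal{A}/\mathbb{R}e$, $\|\tilde a\|^{\sim}=\inf_{t\in\mathbb{R}}\|a+te\|$ is the quotient norm, and $\tilde L(\tilde a)=\inf_t L(a+te)$ $(=L(a))$ is the quotient seminorm. *)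

From HB Require Import structures.
From mathcomp Require Import all_boot all_order all_algebra.
From mathcomp Require Import boolp classical_sets reals ereal.
Set Implicit Arguments. Unset Strict Implicit. Unset Printing Implicit Defensive.
Import Order.TTheory GRing.Theory Num.Theory.
Local Open Scope classical_set_scope.
Local Open Scope ring_scope.

Definition is_order_unit_space (R : realType) (V : lmodType R)
    (le : V -> V -> Prop) (e : V) : Prop :=
  (forall a, le a a) /\
  (forall a b, le a b -> le b a -> a = b) /\
  (forall a b c, le a b -> le b c -> le a c) /\
  (forall a b c, le a b -> le (a + c) (b + c)) /\
  (forall (t : R) a b, 0 <= t -> le a b -> le (t *: a) (t *: b)) /\
  (forall a, exists r : R, le a (r *: e)) /\
  (forall a, (forall r : R, 0 < r -> le a (r *: e)) -> le a 0).

Definition ou_norm (R : realType) (V : lmodType R)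
    (le : V -> V -> Prop) (e : V) (a : V) : R :=
  inf [set r : R | 0 <= r /\ le (- (r *: e)) a /\ le a (r *: e)].

Definition op_norm (R : realType) (V : lmodType R)
    (le : V -> V -> Prop) (e : V) (mu : V -> R) : R :=
  sup [set `|mu a| | a in [set a | ou_norm le e a <= 1]].

Definition is_state (R : realType) (V : lmodType R)
    (le : V -> V -> Prop) (e : V) (mu : V -> R) : Prop :=
  [/\ (forall a b, mu (a + b) = mu a + mu b),
      (forall (t : R) a, mu (t *: a) = t * mu a),
      (forall a (eps : R), 0 < eps -> exists2 delta : R, 0 < delta &
          forall b, ou_norm le e (b - a) < delta -> `|mu b - mu a| < eps),
      mu e = 1 &
      op_norm le e mu = 1].

Definition is_lip_seminorm (R : realType) (V : lmodType R)
    (e : V) (L : V -> R) : Prop :=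
  [/\ (forall a b, L (a + b) <= L a + L b),
      (forall (t : R) a, L (t *: a) = `|t| * L a) &
      (forall a, L a = 0 <-> exists t : R, a = t *: e)].

Definition rhoL (R : realType) (V : lmodType R) (L : V -> R)
    (mu nu : V -> R) : \bar R :=
  ereal_sup [set (`|mu a - nu a|)%:E | a in [set a | L a <= 1]].

Definition quot_norm (R : realType) (V : lmodType R)
    (le : V -> V -> Prop) (e : V) (a : V) : R :=
  inf [set ou_norm le e (a + t *: e) | t in [set: R]].

Definition quot_L (R : realType) (V : lmodType R) (e : V) (L : V -> R)
    (a : V) : R :=
  inf [set L (a + t *: e) | t in [set: R]].

From HB Require Import structures.
From mathcomp Require Import all_boot all_order all_algebra.
From mathcomp Require Import boolp classical_sets reals ereal.
From mathcomp Require Import ring lra.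
Import Order.TTheory GRing.Theory Num.Theory.
Set Implicit Arguments.
Local Open Scope ring_scope.
Local Open Scope classical_set_scope.

(* Everything is controlled by the sublinear functional
   ou_max b = inf {r | b <= r e} (for C(X) with e = 1 it is max b): the
   order-unit norm is max (ou_max b) (ou_max (-b)), and the quotient norm is
   half the oscillation ou_max b + ou_max (-b), attained at the shift of b by
   its midpoint.  Every state is bounded by the norm, so
   |mu b - nu b| = |mu c - nu c| <= 2 ||c|| for the centred c, which gives
   (2) => (1).  Conversely, Hahn-Banach yields states with mu b = ou_max b and
   nu (-b) = ou_max (-b); evaluated at b / L b their difference is the
   oscillation of b divided by L b, which gives (1) => (2).  When e is not a
   genuine order unit (e.g. e <= 0) the order-unit norm vanishes and there are
   no states, so both conditions hold trivially. *)

Section HahnBanach.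
Variables (R : realType) (V : lmodType R) (p : V -> R).
Hypothesis pD : forall a b, p (a + b) <= p a + p b.
Hypothesis pZ : forall (t : R) a, 0 < t -> p (t *: a) = t * p a.

Lemma sublinear0 : p 0 = 0.
Proof. by have := @pZ 2 0 (ltr0Sn _ 1); rewrite scaler0; lra. Qed.

Lemma sublinear_oppr a : - p (- a) <= p a.
Proof. by have := pD a (- a); rewrite subrr sublinear0; lra. Qed.

Definition linear_graph (G : set (V * R)) : Prop :=
  [/\ (forall x y x' y', G (x, y) -> G (x', y') -> G (x + x', y + y')),
      (forall t x y, G (x, y) -> G (t *: x, t * y)) &
      (forall x y y', G (x, y) -> G (x, y') -> y = y')].

Definition dominated (G : set (V * R)) : Prop :=
  forall x y, G (x, y) -> y <= p x.

Definition graph_adjoin (G : set (V * R)) (z : V) (c : R) : set (V * R) :=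
  [set xy | exists x y s, G (x, y) /\ xy = (x + s *: z, y + s * c)].

Definition line_graph (a : V) : set (V * R) :=
  [set xy | exists s, xy = (s *: a, s * p a)].

Lemma linear_graph_bigcup (F : set (set (V * R))) :
  total_on F subset -> (forall G, F G -> linear_graph G) ->
  linear_graph (\bigcup_(G in F) G).
Proof.
move=> Ftot Flin; split.
- move=> x y x' y' [G1 F1 h1] [G2 F2 h2].
  have [S12|S21] := Ftot _ _ F1 F2.
    by exists G2 => //; have [GD _ _] := Flin _ F2; exact: GD (S12 _ h1) h2.
  by exists G1 => //; have [GD _ _] := Flin _ F1; exact: GD h1 (S21 _ h2).
- by move=> t x y [G FG h]; exists G => //; have [_ GZ _] := Flin _ FG; exact: GZ.
- move=> x y y' [G1 F1 h1] [G2 F2 h2].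
  have [S12|S21] := Ftot _ _ F1 F2.
    by have [_ _ Gf] := Flin _ F2; exact: Gf (S12 _ h1) h2.
  by have [_ _ Gf] := Flin _ F1; exact: Gf h1 (S21 _ h2).
Qed.

Lemma sub_graph_adjoin G z c : G `<=` graph_adjoin G z c.
Proof. by move=> [x y] h; exists x, y, 0; rewrite scale0r mul0r !addr0. Qed.

Lemma graph_adjoin_new G z c : G (0, 0) -> graph_adjoin G z c (z, c).
Proof. by move=> G00; exists 0, 0, 1; rewrite scale1r mul1r !add0r. Qed.

Lemma linear_graph_adjoin G z c : linear_graph G -> (forall y, ~ G (z, y)) ->
  linear_graph (graph_adjoin G z c).
Proof.
case=> GD GZ Gf zG; split.
- move=> _ _ _ _ [x [y [s [h [-> ->]]]]] [x' [y' [s' [h' [-> ->]]]]].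
  exists (x + x'), (y + y'), (s + s'); split; first exact: GD.
  by rewrite scalerDl mulrDl addrACA [y + _ + _]addrACA.
- move=> t _ _ [x [y [s [h [-> ->]]]]].
  exists (t *: x), (t * y), (t * s); split; first exact: GZ.
  by rewrite scalerDr scalerA mulrDr mulrA.
- move=> x _ _ [x1 [y1 [s1 [h1 [Ex1 ->]]]]] [x2 [y2 [s2 [h2 [Ex2 ->]]]]].
  have [Es|s12] := eqVneq s1 s2.
    have Ex : x1 = x2 by apply: (addIr (s1 *: z)); rewrite -Ex1 Ex2 Es.
    by rewrite Es; rewrite Ex in h1; rewrite (Gf _ _ _ h1 h2).
  exfalso; apply: (zG ((s1 - s2)^-1 * (y2 - y1))).
  have h21 : G (x2 - x1, y2 - y1).
    by have := GD _ _ _ _ h2 (GZ (-1) _ _ h1); rewrite scaleN1r mulN1r.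
  have -> : z = (s1 - s2)^-1 *: (x2 - x1).
    have -> : x2 - x1 = (s1 - s2) *: z.
      rewrite scalerBl -[x2](addrK (s2 *: z)) -Ex2 Ex1.
      by rewrite addrAC [x1 + _]addrC addrK.
    by rewrite scalerA mulVf ?scale1r // subr_eq0.
  exact: GZ.
Qed.

Lemma dominated_adjoin_exists G z : linear_graph G -> dominated G -> G (0, 0) ->
  exists c, dominated (graph_adjoin G z c).
Proof.
case=> GD GZ _ Gp G00.
have sep x y x' y' : G (x, y) -> G (x', y') -> y - p (x - z) <= p (x' + z) - y'.
  move=> h h'; have := pD (x - z) (x' + z).
  rewrite addrACA addNr addr0 => /(le_trans (Gp _ _ (GD _ _ _ _ h h'))); lra.
(* By [sep], c := sup C satisfies y - p (x - z) <= c <= p (x + z) - y on G,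
   which is exactly what domination requires for s < 0 and s > 0. *)
pose C := [set xy.2 - p (xy.1 - z) | xy in G].
have C0 : C !=set0 by exists (0 - p (0 - z)), (0, 0).
have hC : has_sup C.
  by split => //; exists (p (0 + z) - 0) => _ [[x y] h <-]; exact: sep.
exists (sup C) => _ _ [x [y [s [h [-> ->]]]]].
have [s_gt0|s_lt0|->] := ltrgt0P s; last by rewrite scale0r mul0r !addr0; exact: Gp.
- have : sup C <= p (s^-1 *: x + z) - s^-1 * y.
    by apply: ge_sup => // _ [[x' y'] h' <-]; apply: sep h' (GZ _ _ _ h).
  rewrite -(ler_pM2l s_gt0) mulrBr mulrA mulfV ?gt_eqF // mul1r -pZ //.
  by rewrite scalerDr scalerA mulfV ?gt_eqF // scale1r; lra.
- have sN_gt0 : 0 < - s by rewrite oppr_gt0.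
  have : (- s)^-1 * y - p ((- s)^-1 *: x - z) <= sup C.
    by apply: sup_upper_bound => //; exists ((- s)^-1 *: x, (- s)^-1 * y) => //; exact: GZ.
  rewrite -(ler_pM2l sN_gt0) mulrBr mulrA mulfV ?gt_eqF // mul1r -pZ //.
  rewrite scalerBr scalerA mulfV ?gt_eqF // scale1r scaleNr opprK; lra.
Qed.

Lemma dominated_linear_extension G : linear_graph G -> dominated G -> G (0, 0) ->
  exists mu : V -> R,
    [/\ forall a b, mu (a + b) = mu a + mu b, forall t a, mu (t *: a) = t * mu a,
        forall a, mu a <= p a & forall x y, G (x, y) -> mu x = y].
Proof.
move=> Glin Gp G00.
(* Stated as an implication so that the union of the empty chain satisfies P. *)
pose P H := [/\ linear_graph H, dominated H & H !=set0 -> G `<=` H].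
have [A [[Alin Ap AG] Amax]] : exists A, P A /\ forall B, A `<` B -> ~ P B.
  apply: Zorn_bigcup => F FP Ftot; split.
  - by apply: linear_graph_bigcup => // H /FP[].
  - by move=> x y [H /FP[_ Hp _] Hxy]; exact: Hp.
  - move=> [xy [H FH Hxy]] q Gq; exists H => //.
    by have [_ _ HG] := FP _ FH; apply: HG => //; exists xy.
have GA : G `<=` A.
  have [/AG//|A0] := pselect (A !=set0).
  exfalso; apply: (Amax G); last by split => // _.
  split; first by move=> xy Axy; exfalso; apply: A0; exists xy.
  by move=> /(_ _ G00) A00; apply: A0; exists (0, 0).
have A00 : A (0, 0) by exact: GA.
have /choice[mu muA] x : exists y, A (x, y).
  apply: contrapT => /forallNP xA.
  have [c Ac] := dominated_adjoin_exists x Alin Ap A00.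
  apply: (Amax (graph_adjoin A x c)).
    split; first exact: sub_graph_adjoin.
    by move=> /(_ _ (graph_adjoin_new A x c A00)); apply: xA.
  split => // [|_]; first exact: linear_graph_adjoin.
  exact: subset_trans GA (sub_graph_adjoin _ _ _).
case: Alin => AD AZ Af.
exists mu; split.
- by move=> a b; apply: Af (muA _) (AD _ _ _ _ (muA a) (muA b)).
- by move=> t a; apply: Af (muA _) (AZ _ _ _ (muA a)).
- by move=> a; apply: Ap.
- by move=> x y /GA; apply: Af (muA x).
Qed.

Lemma linear_graph_line a : linear_graph (line_graph a).
Proof.
split.
- move=> _ _ _ _ [s [-> ->]] [s' [-> ->]]; exists (s + s').
  by rewrite scalerDl mulrDl.
- by move=> t _ _ [s [-> ->]]; exists (t * s); rewrite scalerA mulrA.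
- move=> _ _ _ [s [-> ->]] [s' [Ea ->]].
  have /eqP : (s - s') *: a = 0 by rewrite scalerBl Ea subrr.
  rewrite scaler_eq0 => /orP[/eqP/subr0_eq -> //|/eqP ->].
  by rewrite sublinear0 !mulr0.
Qed.

Lemma dominated_line a : dominated (line_graph a).
Proof.
move=> _ _ [s [-> ->]]; have [s_gt0|s_lt0|->] := ltrgt0P s.
- by rewrite pZ.
- rewrite -[s *: a]opprK -scaleNr -scalerN pZ ?oppr_gt0 //.
  by have := sublinear_oppr a; nra.
- by rewrite scale0r sublinear0 mul0r.
Qed.

Theorem hahn_banach_sublinear a : exists mu : V -> R,
  [/\ forall b c, mu (b + c) = mu b + mu c, forall t b, mu (t *: b) = t * mu b,
      forall b, mu b <= p b & mu a = p a].
Proof.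
have [|mu [mD mZ mp mline]] :=
  dominated_linear_extension (linear_graph_line a) (@dominated_line a).
  by exists 0; rewrite scale0r mul0r.
by exists mu; split => //; apply: mline; exists 1; rewrite scale1r mul1r.
Qed.

End HahnBanach.

Lemma inf_eq_min (R : realType) (E : set R) (m : R) :
  E m -> (forall x, E x -> m <= x) -> inf E = m.
Proof.
move=> Em Em_le; apply/le_anti/andP; split; first by apply: ge_inf Em; exists m.
by apply: lb_le_inf; first exists m.
Qed.

Lemma inf_eq0 (R : realType) (E : set R) :
  (forall x, E x -> 0 <= x /\ E 0) -> inf E = 0.
Proof.
move=> E0; have [[x /E0[_ E0']]|/nonemptyPn->] := pselect (E !=set0).
  by apply: inf_eq_min => // y /E0[].
exact: inf0.
Qed.

Section LipschitzSeminorm.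
Variables (R : realType) (V : lmodType R) (e : V) (L : V -> R).
Hypothesis lipL : is_lip_seminorm e L.

Lemma lip_scale_e t : L (t *: e) = 0.
Proof. by case: lipL => _ _ L0; apply/L0; exists t. Qed.

Lemma lip_ge0 b : 0 <= L b.
Proof.
case: lipL => LD LZ _; have := LD b (- b).
by rewrite subrr -(scale0r e) lip_scale_e -scaleN1r LZ normrN1 mul1r; lra.
Qed.

Lemma lipDe b t : L (b + t *: e) = L b.
Proof.
case: lipL => LD _ _; apply/le_anti/andP; split.
  by have := LD b (t *: e); rewrite lip_scale_e addr0.
by have := LD (b + t *: e) ((- t) *: e); rewrite lip_scale_e addr0 -addrA -scalerDl subrr scale0r addr0.
Qed.

Lemma quot_LE b : quot_L e L b = L b.
Proof.
apply: inf_eq_min; first by exists 0; rewrite // scale0r addr0.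
by move=> _ [t _ <-]; rewrite lipDe.
Qed.

End LipschitzSeminorm.

Section OrderUnitSpace.
Variables (R : realType) (V : lmodType R) (le : V -> V -> Prop) (e : V).
Hypothesis ouV : is_order_unit_space le e.

Let ou_anti : forall a b, le a b -> le b a -> a = b.
Proof. by case: ouV => _ []. Qed.
Let ou_trans : forall a b c, le a b -> le b c -> le a c.
Proof. by case: ouV => _ [_ []]. Qed.
Let ou_addr : forall a b c, le a b -> le (a + c) (b + c).
Proof. by case: ouV => _ [_ [_ []]]. Qed.
Let ou_scale : forall (t : R) a b, 0 <= t -> le a b -> le (t *: a) (t *: b).
Proof. by case: ouV => _ [_ [_ [_ []]]]. Qed.
Let ou_bounded : forall a, exists r : R, le a (r *: e).
Proof. by case: ouV => _ [_ [_ [_ [_ []]]]]. Qed.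
Let ou_archimedean : forall a, (forall r : R, 0 < r -> le a (r *: e)) -> le a 0.
Proof. by case: ouV => _ [_ [_ [_ [_ []]]]]. Qed.

Lemma ou_addl a b c : le a b -> le (c + a) (c + b).
Proof. by rewrite ![c + _]addrC; apply: ou_addr. Qed.

Lemma ou_add a b c d : le a b -> le c d -> le (a + c) (b + d).
Proof. by move=> /(ou_addr c) ab /(ou_addl b); apply: ou_trans. Qed.

Lemma ou_opp a b : le a b -> le (- b) (- a).
Proof. by move=> /(ou_addr (- a - b)); rewrite addrA subrr add0r addrCA subrr addr0. Qed.

Lemma ou_subr_ge0 a b : le 0 (b - a) -> le a b.
Proof. by move=> /(ou_addr a); rewrite add0r subrK. Qed.

Lemma ou_norm_degenerate : ~ (le 0 e /\ ~ le e 0) -> forall b, ou_norm le e b = 0.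
Proof.
move=> deg b; apply: inf_eq0 => x [x_ge0 [lo hi]]; split => //.
have [e_ge0|e_nge0] := pselect (le 0 e).
  have e0 : e = 0 by apply: ou_anti => //; apply: contrapT => ?; apply: deg.
  by move: lo hi; rewrite e0 /= !scaler0.
suff x0 : x = 0 by rewrite -x0.
apply/eqP; rewrite eq_le x_ge0 andbT leNgt; apply/negP => x_gt0; apply: e_nge0.
have := ou_addr (x *: e) (ou_trans lo hi); rewrite addNr -scalerDl.
move=> /(@ou_scale (x + x)^-1 _ _); rewrite scaler0 scalerA mulVf ?scale1r.
  by apply; rewrite invr_ge0; lra.
by rewrite gt_eqF //; lra.
Qed.

Lemma state_nondegenerate mu : is_state le e mu -> le 0 e /\ ~ le e 0.
Proof.
case=> _ muZ _ mu_e; apply: contra_eqP => /ou_norm_degenerate norm0.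
rewrite /op_norm; set S := [set _ | _ in _].
have [hS|/sup_out->] := pselect (has_sup S); last by rewrite eq_sym oner_neq0.
suff : 2 <= sup S by move=> le2S; apply/eqP => S1; rewrite S1 in le2S; lra.
apply: sup_upper_bound => //; exists (2 *: e); first by rewrite /= norm0 ler01.
by rewrite muZ mu_e mulr1 ger0_norm.
Qed.

Section Nondegenerate.
Hypotheses (e_ge0 : le 0 e) (e_nle0 : ~ le e 0).

Lemma ou_le_scale_e s t : s <= t -> le (s *: e) (t *: e).
Proof.
move=> st; apply: ou_subr_ge0; rewrite -scalerBl.
by have := @ou_scale (t - s) 0 e; rewrite scaler0 subr_ge0; apply.
Qed.

Lemma ou_scale_e_ge0 r : le 0 (r *: e) -> 0 <= r.
Proof.
move=> re_ge0; rewrite leNgt; apply/negP => r_lt0; apply: e_nle0.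
have r_inv_ge0 : 0 <= (- r)^-1 by rewrite invr_ge0 oppr_ge0 ltW.
have := ou_opp (ou_scale _ r_inv_ge0 re_ge0).
by rewrite scaler0 scalerA invrN mulNr mulVf ?ltr0_neq0 // scaleN1r opprK oppr0.
Qed.

Definition ou_max b := inf [set r | le b (r *: e)].

Lemma ou_maxP b r : le b (r *: e) <-> ou_max b <= r.
Proof.
split.
  move=> b_le; apply: (ge_inf _ b_le).
  have [q hq] := ou_bounded (- b); exists (- q) => s hs.
  by have := ou_add hq hs; rewrite addNr -scalerDl => /ou_scale_e_ge0; lra.
move=> max_le; apply: ou_subr_ge0.
suff : le (b - r *: e) 0 by move/ou_opp; rewrite oppr0 opprB.
apply: ou_archimedean => eps eps_gt0.
have lt_max : ou_max b < r + eps by apply: le_lt_trans max_le _; rewrite ltrDl.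
have [s b_le s_lt] := inf_lt (ou_bounded b) lt_max.
have := ou_addr (- (r *: e)) (ou_trans b_le (ou_le_scale_e _ _ (ltW s_lt))).
by rewrite -scaleNr -scalerDl addrAC subrr add0r.
Qed.

Lemma ou_max_le b : le b (ou_max b *: e).
Proof. exact/ou_maxP. Qed.

Lemma ou_max_eq b m : (forall r, le b (r *: e) <-> m <= r) -> ou_max b = m.
Proof.
move=> bP; apply/le_anti/andP; split; first exact/ou_maxP/bP.
exact/bP/ou_max_le.
Qed.

Lemma ou_maxD b c : ou_max (b + c) <= ou_max b + ou_max c.
Proof. by apply/ou_maxP; rewrite scalerDl; apply: ou_add; exact: ou_max_le. Qed.

Lemma ou_maxZ t b : 0 < t -> ou_max (t *: b) = t * ou_max b.
Proof.
move=> t_gt0; apply: ou_max_eq => r; rewrite -ler_pdivlMl // -ou_maxP; split.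
  move=> /(@ou_scale t^-1 _ _); rewrite invr_ge0 scalerA mulVf ?gt_eqF // scale1r scalerA.
  by apply; exact: ltW.
move=> /(@ou_scale t _ _); rewrite scalerA mulrA mulfV ?gt_eqF // mul1r.
by apply; exact: ltW.
Qed.

Lemma ou_maxDe b t : ou_max (b + t *: e) = ou_max b + t.
Proof.
apply: ou_max_eq => r; rewrite -lerBrDr -ou_maxP; split.
  by move=> /(ou_addr (- (t *: e))); rewrite addrK -scaleNr -scalerDl.
by move=> /(ou_addr (t *: e)); rewrite -scalerDl subrK.
Qed.

Lemma ou_max0 : ou_max 0 = 0.
Proof.
apply: ou_max_eq => r; split; first exact: ou_scale_e_ge0.
by move=> r_ge0; have := ou_scale _ r_ge0 e_ge0; rewrite scaler0.
Qed.

Lemma ou_max_scale_e t : ou_max (t *: e) = t.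
Proof. by have := ou_maxDe 0 t; rewrite add0r ou_max0 add0r. Qed.

Definition ou_osc b := ou_max b + ou_max (- b).

Lemma ou_osc_ge0 b : 0 <= ou_osc b.
Proof. by have := @sublinear_oppr _ _ _ ou_maxD ou_maxZ b; rewrite /ou_osc; lra. Qed.

Lemma ou_normE b : ou_norm le e b = Num.max (ou_max b) (ou_max (- b)).
Proof.
apply: inf_eq_min.
  split; first by have := ou_osc_ge0 b; rewrite /ou_osc le_max; case: leP => //; lra.
  split; last by apply/ou_maxP; rewrite le_max lexx.
  suff /ou_opp : le (- b) (Num.max (ou_max b) (ou_max (- b)) *: e) by rewrite opprK.
  by apply/ou_maxP; rewrite le_max lexx orbT.
move=> x [_ [lo hi]]; rewrite ge_max; apply/andP; split; apply/ou_maxP => //.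
by have := ou_opp lo; rewrite opprK.
Qed.

Lemma ou_norm_ge_osc b : ou_osc b / 2 <= ou_norm le e b.
Proof. by rewrite ou_normE /ou_osc le_max; case: leP; lra. Qed.

Lemma ou_norm_ge0 b : 0 <= ou_norm le e b.
Proof. by apply: le_trans (ou_norm_ge_osc b); have := ou_osc_ge0 b; lra. Qed.

Lemma ou_normZ t b : 0 < t -> ou_norm le e (t *: b) = t * ou_norm le e b.
Proof. by move=> t_gt0; rewrite !ou_normE -scalerN !ou_maxZ // maxr_pMr // ltW. Qed.

Lemma ou_oscDe b t : ou_osc (b + t *: e) = ou_osc b.
Proof. by rewrite /ou_osc opprD -scaleNr !ou_maxDe addrACA subrr addr0. Qed.

Definition ou_mid b := (ou_max b - ou_max (- b)) / 2.

Lemma ou_norm_center b : ou_norm le e (b - ou_mid b *: e) = ou_osc b / 2.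
Proof.
rewrite -scaleNr ou_normE opprD -scaleNr opprK !ou_maxDe /ou_osc /ou_mid.
apply/le_anti; rewrite ge_max le_max; apply/andP; split; last by apply/orP; left; lra.
by apply/andP; split; lra.
Qed.

Lemma quot_normE b : quot_norm le e b = ou_osc b / 2.
Proof.
apply: inf_eq_min; first by exists (- ou_mid b); rewrite // scaleNr ou_norm_center.
by move=> _ [t _ <-]; rewrite -(ou_oscDe b t); exact: ou_norm_ge_osc.
Qed.

Lemma state_le_ou_norm mu : is_state le e mu -> forall b, `|mu b| <= ou_norm le e b.
Proof.
case=> _ muZ _ _; rewrite /op_norm; set S := [set _ | _ in _] => opn b.
have hS : has_sup S.
  by apply: contrapT => /sup_out S0; move: opn; rewrite S0 => /eqP; rewrite eq_sym oner_eq0.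
apply/ler_addgt0Pr => eps eps_gt0.
have s_gt0 : 0 < ou_norm le e b + eps by rewrite ltr_wpDl ?ou_norm_ge0.
have : `|mu ((ou_norm le e b + eps)^-1 *: b)| <= 1.
  rewrite -opn; apply: sup_upper_bound => //; exists ((ou_norm le e b + eps)^-1 *: b) => //=.
  by rewrite ou_normZ ?invr_gt0 // mulrC ler_pdivrMr // mul1r lerDl ltW.
by rewrite muZ normrM gtr0_norm ?invr_gt0 // mulrC ler_pdivrMr // mul1r.
Qed.

Lemma state_of_dominated mu :
  (forall a b, mu (a + b) = mu a + mu b) -> (forall t a, mu (t *: a) = t * mu a) ->
  (forall a, mu a <= ou_max a) -> is_state le e mu.
Proof.
move=> muD muZ mu_le.
have muN b : mu (- b) = - mu b by rewrite -scaleN1r muZ mulN1r.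
have mu_norm b : `|mu b| <= ou_norm le e b.
  rewrite ler_norml ou_normE; apply/andP; split.
    by rewrite lerNl -muN; apply: le_trans (mu_le _) _; rewrite le_max lexx orbT.
  by apply: le_trans (mu_le _) _; rewrite le_max lexx.
have mu_e : mu e = 1.
  apply/le_anti/andP; split; first by rewrite -(ou_max_scale_e 1) scale1r.
  by rewrite -lerN2 -muN -(ou_max_scale_e (-1)) scaleN1r.
have norm_e : ou_norm le e e = 1.
  by rewrite ou_normE -scaleN1r -{1}[e]scale1r !ou_max_scale_e max_l // lerN10.
split => //.
- move=> b eps eps_gt0; exists eps => // c.
  by rewrite -muN -muD; apply: le_lt_trans (mu_norm _).
- rewrite /op_norm; set S := [set _ | _ in _].
  have S1 : S 1 by exists e; rewrite /= ?norm_e ?mu_e ?normr1.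
  have S_le1 : ubound S 1 by move=> _ [b b_le1 <-]; apply: le_trans (mu_norm b) _.
  apply/le_anti/andP; split; first by apply: ge_sup => //; exists 1.
  by apply: sup_upper_bound => //; split; exists 1.
Qed.

Lemma state_attaining_max a : exists mu, is_state le e mu /\ mu a = ou_max a.
Proof.
have [mu [muD muZ mu_le mu_a]] := @hahn_banach_sublinear _ _ _ ou_maxD ou_maxZ a.
by exists mu; split => //; apply: state_of_dominated.
Qed.

End Nondegenerate.

Variables (L : V -> R) (r : R).
Hypotheses (lipL : is_lip_seminorm e L) (r_ge0 : 0 <= r).

Lemma quot_norm_le_of_rhoL :
  (forall mu nu, is_state le e mu -> is_state le e nu -> (rhoL L mu nu <= (2 * r)%:E)%E) ->
  forall b, quot_norm le e b <= r * L b.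
Proof.
move=> diam b.
have [[e_ge0 e_nle0]|deg] := pselect (le 0 e /\ ~ le e 0); last first.
  rewrite (_ : quot_norm le e b = 0) ?mulr_ge0 ?(lip_ge0 lipL) //.
  rewrite /quot_norm; apply: inf_eq0 => _ [t _ <-]; rewrite ou_norm_degenerate //.
  by split => //; exists t => //; rewrite ou_norm_degenerate.
rewrite quot_normE //; have [Lb0|Lb_neq0] := eqVneq (L b) 0.
  rewrite Lb0 mulr0; case: lipL => _ _ /(_ b) [/(_ Lb0) [t ->] _].
  by rewrite /ou_osc -scaleNr !ou_max_scale_e // subrr mul0r.
have Lb_gt0 : 0 < L b by rewrite lt_def Lb_neq0 (lip_ge0 lipL).
have [mu [mu_state mu_b]] := state_attaining_max e_ge0 e_nle0 b.
have [nu [nu_state nu_b]] := state_attaining_max e_ge0 e_nle0 (- b).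
set c := (L b)^-1 *: b.
have c_le : ((`|mu c - nu c|)%:E <= rhoL L mu nu)%E.
  apply: ereal_sup_ubound; exists c => //=.
  by case: lipL => _ LZ _; rewrite LZ gtr0_norm ?invr_gt0 // mulVf ?gt_eqF.
have := le_trans c_le (diam _ _ mu_state nu_state); rewrite lee_fin.
case: mu_state => _ muZ _ _ _; case: nu_state => _ nuZ _ _ _.
have nu_b' : nu b = - ou_max (- b) by rewrite -nu_b -scaleN1r nuZ mulN1r opprK.
rewrite muZ nuZ -mulrBr mu_b nu_b' opprK -/(ou_osc b) normrM.
rewrite gtr0_norm ?invr_gt0 // ger0_norm ?ou_osc_ge0 // mulrC ler_pdivrMr //.
lra.
Qed.

Lemma rhoL_le_of_quot_norm :
  (forall b, quot_norm le e b <= r * L b) ->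
  forall mu nu, is_state le e mu -> is_state le e nu -> (rhoL L mu nu <= (2 * r)%:E)%E.
Proof.
move=> qn_le mu nu mu_state nu_state.
have [e_ge0 e_nle0] := state_nondegenerate mu_state.
apply: ge_ereal_sup => _ [b Lb_le1 <-]; rewrite lee_fin.
set c := b - ou_mid b *: e.
have mu_c := state_le_ou_norm e_ge0 e_nle0 mu_state c.
have nu_c := state_le_ou_norm e_ge0 e_nle0 nu_state c.
rewrite ou_norm_center // in mu_c nu_c.
have := qn_le b; rewrite quot_normE // => osc_le.
have rLb_le : r * L b <= r by rewrite -[leRHS]mulr1 ler_wpM2l.
case: mu_state => muD muZ _ mu_e _; case: nu_state => nuD nuZ _ nu_e _.
have -> : mu b - nu b = mu c - nu c.
  by rewrite /c -scaleNr muD nuD muZ nuZ mu_e nu_e; lra.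
have := ler_normB (mu c) (nu c); lra.
Qed.

End OrderUnitSpace.

Theorem proposition2p2 (R : realType) (V : lmodType R)
    (le : V -> V -> Prop) (e : V) (L : V -> R) (r : R) :
  is_order_unit_space le e -> is_lip_seminorm e L -> 0 <= r ->
  ((forall mu nu : V -> R, is_state le e mu -> is_state le e nu ->
      (rhoL L mu nu <= (2 * r)%:E)%E) <->
   (forall a : V, quot_norm le e a <= r * quot_L e L a)).
Proof.
move=> ouV lipL r_ge0; split.
- by move=> diam a; rewrite quot_LE //; exact: quot_norm_le_of_rhoL.
- by move=> qn_le; apply: rhoL_le_of_quot_norm => // b; rewrite -(quot_LE lipL).
Qed.
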